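(* Let $p=\frac12-\varepsilon$ with $0<\varepsilon\le\frac12$, and run Algorithm LB-Search (described in the context) with $r=\frac12-\eta$, where $\eta=\varepsilon/2$. If the reply to each query was erroneous with probability at most $p$, independently, then the algorithm outputs the target vertex with probability at least $1-n^{-3}$.
   Context: Setting: $G=(V,E)$ is a finite simple connected graph with $n$ vertices and an unknown target vertex $v^{*}$. A query on vertex $q$ returns a reply $v$; a correct reply is $v=q$ if $q=v^{*}$, and otherwise a neighbor of $q$ on a shortest path from $q$ to $v^{*}$. A vertex $u$ is consistent (compatible) with reply $v$ to query $q$ if $q=v=u$, or $q\ne v$ and $v$ lies on a shortest path between $u$ and $q$; $N(q,v)$ denotes the set of such $u$. For weights $\omega\colon V\to(0,\infty)$ and $X\subseteq V$ let $\omega(X)=\sum_{u\in X}\omega(u)$, $\Lambda(v)=\max_{u\in N(v)}\omega(N(v,u))$ where $N(v)$ is the neighbor set, and call $q$ $\delta$-close to a median if $\Lambda(q)\le(\frac12+\delta)\omega(V)$. Parameters: it is assumed that $\eta<\frac18$; $r=\frac12-\eta$, $\delta=\eta/4$, $\Gamma=\frac{1}{1-4\eta}$, $\tau=\frac{10\log_2 n}{\eta^2}$. Algorithm LB-Search: set $\omega(v)=1/n$ and a counter $\ell_v=0$ for every $v$. Repeat for $\tau$ steps: let $q$ be any vertex $\delta$-close to a median with respect to current weights; query $q$; for each vertex $u$ not compatible with the reply, set $\omega(u)\gets\omega(u)/\Gamma$ and $\ell_u\gets\ell_u+1$. Finally return a vertex $v$ with the smallest $\ell_v$. *)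

From HB Require Import structures.
From mathcomp Require Import all_boot all_order all_algebra.
From mathcomp Require Import reals exp.
Set Implicit Arguments. Unset Strict Implicit. Unset Printing Implicit Defensive.
Import Order.TTheory GRing.Theory Num.Theory.
Local Open Scope ring_scope.

(* Graph G = (V, e): e is a symmetric irreflexive relation on a finType V. *)

Definition nbhd (V : finType) (e : rel V) (A : {set V}) : {set V} :=
  A :|: [set y | [exists z in A, e z y]].

Fixpoint ball (V : finType) (e : rel V) (k : nat) (x : V) : {set V} :=
  match k with
  | 0 => [set x]
  | k'.+1 => nbhd e (ball e k' x)
  end.

(* graph distance (the least k with y in the k-ball of x; well-defined
   for connected graphs since distances are < #|V|) *)
Definition gdist (V : finType) (e : rel V) (x y : V) : nat :=
  find (fun k => y \in ball e k x) (iota 0 #|V|).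

Definition on_sp (V : finType) (e : rel V) (u v q : V) : bool :=
  gdist e u q == (gdist e u v + gdist e v q)%N.

(* u is consistent (compatible) with reply v to query q; N(q,v) = {u | ...} *)
Definition compatible (V : finType) (e : rel V) (q v u : V) : bool :=
  ((q == v) && (v == u)) || ((q != v) && on_sp e u v q).

Definition correct_reply (V : finType) (e : rel V) (vs q v : V) : bool :=
  if q == vs then v == q else e q v && on_sp e q v vs.

Definition weight (R : realType) (V : finType) (Gam : R) (l : {ffun V -> nat})
  (u : V) : R := (#|V|%:R)^-1 / Gam ^+ l u.

Definition wN (R : realType) (V : finType) (e : rel V) (Gam : R)
  (l : {ffun V -> nat}) (q v : V) : R :=
  \sum_(u | compatible e q v u) weight Gam l u.

Definition Lambda (R : realType) (V : finType) (e : rel V) (Gam : R)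
  (l : {ffun V -> nat}) (q : V) : R :=
  \big[Num.max/0]_(u | e q u) wN e Gam l q u.

Definition close_to_median (R : realType) (V : finType) (e : rel V)
  (delta Gam : R) (l : {ffun V -> nat}) (q : V) : bool :=
  Lambda e Gam l q <= (1/2 + delta) * \sum_(u : V) weight Gam l u.

Definition upd (V : finType) (e : rel V) (l : {ffun V -> nat}) (q v : V)
  : {ffun V -> nat} :=
  [ffun u => (l u + ~~ compatible e q v u)%N].

(* Counters of LB-Search after k steps, along the error pattern es.
   Q : query chosen, as a function of the past error bits (length k);
   A : reply received, as a function of the error bits including the
       current one (length k+1). *)
Fixpoint counters (V : finType) (e : rel V) (Q A : seq bool -> V)
  (es : seq bool) (k : nat) : {ffun V -> nat} :=
  match k with
  | 0 => [ffun _ => 0%N]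
  | k'.+1 => upd e (counters e Q A es k') (Q (take k' es)) (A (take k'.+1 es))
  end.

From HB Require Import structures.
From mathcomp Require Import all_boot all_order all_algebra.
From mathcomp Require Import reals sequences exp.
From mathcomp Require Import ring lra.
Import Order.TTheory GRing.Theory Num.Theory.
Local Open Scope ring_scope.
Set Implicit Arguments. Unset Strict Implicit.

(* Measure progress by the potential Phi = omega(V \ {vs}) / omega(vs), the
   weight of the non-target vertices relative to the target vs.  A correct
   reply to a query that is delta-close to a median never penalises vs and
   divides by Gam the weight of roughly half of the other vertices, while an
   erroneous reply multiplies the relative weight of at most roughly half of
   them by Gam.  With error probability at most 1/2 - eps, the expected
   potential therefore shrinks by the factor 1 - 2 eps^2/3 at every query; the
   expectation is handled by pairing each error pattern with the one differing
   at the current query.  Starting from Phi <= n, after tau queries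
   E[Phi] <= n (1 - 2 eps^2/3)^tau <= n^-3, and a wrong output u has
   ell_u <= ell_vs, i.e. omega(u) >= omega(vs), which forces Phi >= 1. *)

Section ShortestPaths.
Variables (V : finType) (e : rel V).

Lemma mem_ballS k x y :
  (y \in ball e k.+1 x) = (y \in ball e k x) || [exists z in ball e k x, e z y].
Proof. by rewrite /= /nbhd !inE. Qed.

Lemma ball_subS k x : {subset ball e k x <= ball e k.+1 x}.
Proof. by move=> y; rewrite mem_ballS => ->. Qed.

Lemma mem_ball_edge k x y z : e y z -> x \in ball e k z -> x \in ball e k.+1 y.
Proof.
move=> eyz; elim: k x => [|k IH] x.
  rewrite mem_ballS /= !inE => /eqP->; apply/orP; right.
  by apply/existsP; exists y; rewrite inE eqxx.
rewrite mem_ballS => /orP[/IH/ball_subS //|/existsP[w /andP[wk ewx]]].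
by rewrite mem_ballS; apply/orP; right; apply/existsP; exists w; rewrite ewx andbT IH.
Qed.

Lemma gdist_eq0 x y : (gdist e x y == 0%N) = (y == x).
Proof.
rewrite /gdist; have : (0 < #|V|)%N by apply/card_gt0P; exists x.
by case: #|V| => // m _; rewrite /= inE; case: (y == x).
Qed.

Lemma compatible_self q u : compatible e q q u = (u == q).
Proof. by rewrite /compatible eqxx /= orbF eq_sym. Qed.

Lemma query_incompatible q v : v != q -> ~~ compatible e q v q.
Proof.
move=> vq; rewrite /compatible eq_sym (negbTE vq) /= /on_sp.
have /eqP-> : gdist e q q == 0%N by rewrite gdist_eq0.
by rewrite eq_sym addn_eq0 gdist_eq0 (negbTE vq).
Qed.

Hypotheses (e_sym : symmetric e) (e_irr : irreflexive e).

Lemma mem_ball_sym k x y : y \in ball e k x -> x \in ball e k y.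
Proof.
elim: k x y => [|k IH] x y; first by rewrite /= !inE eq_sym.
rewrite mem_ballS => /orP[/IH/ball_subS //|/existsP[z /andP[zk ezy]]].
by apply: (@mem_ball_edge _ _ _ z); rewrite 1?e_sym // IH.
Qed.

Lemma gdistC x y : gdist e x y = gdist e y x.
Proof. by apply: eq_find => k; apply/idP/idP; apply: mem_ball_sym. Qed.

Lemma correct_reply_compatible vs q v :
  correct_reply e vs q v -> compatible e q v vs.
Proof.
rewrite /correct_reply /compatible; case: eqP => [-> /eqP-> | _ /andP[eqv]].
  by rewrite eqxx.
have /negbTE-> : q != v by apply: contraTneq eqv => <-; rewrite e_irr.
by rewrite /on_sp (gdistC vs q) (gdistC vs v) (gdistC v q) addnC.
Qed.

End ShortestPaths.

Section Potential.
Variables (R : realType) (V : finType) (e : rel V) (Gam : R).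
Hypothesis Gam_ge1 : 1 <= Gam.
Implicit Types (l : {ffun V -> nat}) (q v vs u : V).

Let Gam_gt0 : 0 < Gam. Proof. exact: lt_le_trans ltr01 Gam_ge1. Qed.

Definition relw (l : {ffun V -> nat}) (vs u : V) : R :=
  weight Gam l u / weight Gam l vs.

Definition potential (l : {ffun V -> nat}) (vs : V) : R :=
  \sum_(u | u != vs) relw l vs u.

Definition potential_compat (l : {ffun V -> nat}) (vs q v : V) : R :=
  \sum_(u | (u != vs) && compatible e q v u) relw l vs u.

Lemma weight_gt0 l u : 0 < weight Gam l u.
Proof.
have n_gt0 : (0 < #|V|)%N by apply/card_gt0P; exists u.
by rewrite /weight divr_gt0 ?invr_gt0 ?ltr0n ?exprn_gt0.
Qed.

Lemma relw_ge0 l vs u : 0 <= relw l vs u.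
Proof. by rewrite /relw divr_ge0 ?ltW ?weight_gt0. Qed.

Lemma relw_id l vs : relw l vs vs = 1.
Proof. by rewrite /relw divff ?gt_eqF ?weight_gt0. Qed.

Lemma relw_ge1 l vs u : (l u <= l vs)%N -> 1 <= relw l vs u.
Proof.
move=> le_u_vs; rewrite /relw ler_pdivlMr ?weight_gt0 // mul1r /weight.
rewrite ler_pM2l ?invr_gt0 ?ltr0n; last by apply/card_gt0P; exists u.
by rewrite lef_pV2 ?posrE ?exprn_gt0 ?ler_weXn2l.
Qed.

Lemma relw_upd l q v vs u :
  relw (upd e l q v) vs u =
  relw l vs u * (Gam ^+ (~~ compatible e q v vs) / Gam ^+ (~~ compatible e q v u)).
Proof.
have n_gt0 : (0 < #|V|)%N by apply/card_gt0P; exists u.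
rewrite /relw /weight !ffunE !exprD; field.
by rewrite !expf_neq0 ?gt_eqF ?ltr0n.
Qed.

Lemma potential_ge0 l vs : 0 <= potential l vs.
Proof. by apply: sumr_ge0 => u _; apply: relw_ge0. Qed.

Lemma potential_compat_ge0 l vs q v : 0 <= potential_compat l vs q v.
Proof. by apply: sumr_ge0 => u _; apply: relw_ge0. Qed.

Lemma potential_compat_le l vs q v : potential_compat l vs q v <= potential l vs.
Proof.
rewrite /potential (bigID (compatible e q v)) /= lerDl.
by apply: sumr_ge0 => u _; apply: relw_ge0.
Qed.

Lemma potential_ge1 l vs u : u != vs -> (l u <= l vs)%N -> 1 <= potential l vs.
Proof.
move=> u_vs le_u_vs; rewrite /potential (bigD1 u) //= -[1]addr0.
by rewrite lerD ?relw_ge1 // sumr_ge0 // => w _; apply: relw_ge0.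
Qed.

Lemma potential_upd_compat l q v vs : compatible e q v vs ->
  potential (upd e l q v) vs =
  potential_compat l vs q v + Gam^-1 * (potential l vs - potential_compat l vs q v).
Proof.
move=> c_vs.
have potential_split l' : potential l' vs =
    \sum_(u | (u != vs) && ~~ compatible e q v u) relw l' vs u + potential_compat l' vs q v.
  by rewrite /potential (bigID (compatible e q v)) addrC.
rewrite !potential_split addrK addrC mulr_sumr /potential_compat.
congr (_ + _); apply: eq_bigr => u /andP[_ c_u].
  by rewrite relw_upd c_vs c_u divr1 mulr1.
by rewrite relw_upd c_vs (negbTE c_u) expr0 expr1 mul1r mulrC.
Qed.

Lemma potential_upd_le l q v vs :
  potential (upd e l q v) vs <= potential l vs + (Gam - 1) * potential_compat l vs q v.
Proof.
rewrite /potential /potential_compat big_mkcondr mulr_sumr -big_split /=.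
apply: ler_sum => u _; rewrite relw_upd.
have := relw_ge0 l vs u; set w := relw l vs u => w_ge0.
(* The factor is at most Gam if u is compatible and at most 1 otherwise. *)
case: (compatible e q v vs); case: (compatible e q v u) => /=;
  rewrite ?expr0 ?expr1 ?divr1 ?mulr1 ?mulr0 ?addr0 ?divff ?gt_eqF //.
- by rewrite lerDl mulr_ge0 ?subr_ge0.
- by rewrite div1r ler_piMr // invf_le1.
- lra.
- by rewrite mulr1.
Qed.

Lemma sum_compatible_relw l q v vs :
  \sum_(u | compatible e q v u) relw l vs u =
  (compatible e q v vs)%:R + potential_compat l vs q v.
Proof.
rewrite /potential_compat; have [c_vs|nc_vs] := boolP (compatible e q v vs).
  by rewrite (bigD1 vs) //= relw_id; congr (_ + _); apply: eq_bigl => u; rewrite andbC.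
rewrite add0r; apply: eq_bigl => u; case: eqP => [->|_] //.
by rewrite (negbTE nc_vs).
Qed.

Lemma potential_compat_self l vs q :
  potential_compat l vs q q = if q == vs then 0 else relw l vs q.
Proof.
rewrite /potential_compat; under eq_bigl do rewrite compatible_self.
case: eqP => [->|/eqP q_vs]; first by rewrite big_pred0 // => u; rewrite andNb.
rewrite (eq_bigl (pred1 q)) ?big_pred1_eq // => u /=.
by case: (u =P q) => [->|_]; rewrite ?q_vs ?andbF.
Qed.

Lemma potential_compat_add_le l vs q v : q != vs -> ~~ compatible e q v q ->
  potential_compat l vs q v + relw l vs q <= potential l vs.
Proof.
move=> q_vs nc_q; rewrite /potential (bigD1 q) //= [X in X <= _]addrC lerD2l.
rewrite /potential_compat [X in X <= _]big_mkcond [X in _ <= X]big_mkcond /=.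
apply: ler_sum => u _; case: (u =P q) => [->|_]; first by rewrite (negbTE nc_q) andbF.
by case: (u != vs); case: (compatible e q v u) => //=; apply: relw_ge0.
Qed.

Lemma median_bound delta l q v vs : e q v -> close_to_median e delta Gam l q ->
  \sum_(u | compatible e q v u) relw l vs u <= (1/2 + delta) * (1 + potential l vs).
Proof.
move=> eqv; rewrite /close_to_median => /(le_trans (le_bigmax_cond _ _ eqv)).
have w_gt0 := weight_gt0 l vs.
have -> : 1 + potential l vs = \sum_u weight Gam l u / weight Gam l vs.
  by rewrite (bigD1 vs) //= -(relw_id l vs).
by rewrite -mulr_suml -mulr_suml mulrA ler_pM2r ?invr_gt0.
Qed.

Lemma potential_init vs : potential [ffun _ => 0%N] vs <= #|V|%:R.
Proof.
rewrite /potential (eq_bigr (fun _ => 1)) => [|u _]; last first.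
  by rewrite /relw /weight !ffunE divff // gt_eqF // -(ffunE (fun _ => 0%N) u) weight_gt0.
by rewrite sumr_const ler_nat max_card.
Qed.

End Potential.

Section RealBounds.
Variable R : realType.
Implicit Types eps p Phi D M : R.

(* Phi is the current potential, D the relative weight discarded by the correct
   reply and M the relative weight kept by the erroneous one. *)
Lemma mixture_le_contraction eps p Phi D M :
  0 < eps < 1/2 -> 0 <= p <= 1/2 - eps -> 0 <= Phi -> 0 <= M ->
  2 * eps / 3 * Phi <= (1 + 2 * eps) * D - M ->
  (1 - p) * (Phi - 2 * eps * D) + p * (Phi + 2 * eps / (1 - 2 * eps) * M)
    <= (1 - 2 * eps ^+ 2 / 3) * Phi.
Proof.
move=> /andP[eps_gt0 eps_lt] /andP[p_ge0 p_le] Phi_ge0 M_ge0 margin.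
set g := 2 * eps / (1 - 2 * eps).
have g_ge0 : 0 <= g by rewrite divr_ge0 //; lra.
have gM : (1/2 - eps) * (g * M) = eps * M.
  by rewrite mulrA /g; congr (_ * _); field; lra.
have D_ge0 : 0 <= D.
  have epsPhi_ge0 : 0 <= eps * Phi by rewrite mulr_ge0 // ltW.
  have : 0 <= (1 + 2 * eps) * D by lra.
  by rewrite pmulr_rge0 //; lra.
(* The bound is increasing in p; at p = 1/2 - eps it is Phi - eps ((1 + 2 eps) D - M). *)
have sum_ge0 : 0 <= 2 * eps * D + g * M.
  by apply: addr_ge0; apply: mulr_ge0 => //; lra.
have worst : p * (2 * eps * D + g * M) <= (1/2 - eps) * (2 * eps * D + g * M).
  exact: ler_wpM2r.
have := ler_wpM2l (ltW eps_gt0) margin.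
lra.
Qed.

Lemma contraction_margin eps Phi D M : 0 < eps < 1/4 -> 0 <= Phi ->
  (M <= D /\ Phi <= 3 * D) \/
  ((1/2 - eps/8) * (1 + Phi) <= D /\ M <= (1/2 + eps/8) * (1 + Phi)) ->
  2 * eps / 3 * Phi <= (1 + 2 * eps) * D - M.
Proof.
move=> /andP[eps_gt0 eps_lt] Phi_ge0 [[M_le D_ge]|[D_ge M_le]].
  have : 0 <= eps * (3 * D - Phi) by rewrite mulr_ge0 //; lra.
  lra.
have scale_ge0 : 0 <= 1 + 2 * eps by lra.
have := ler_wpM2l scale_ge0 D_ge.
have : 0 <= eps * (1 + Phi) * (1/4 - eps) by rewrite !mulr_ge0 //; lra.
have : 0 <= eps * Phi by rewrite mulr_ge0 // ltW.
lra.
Qed.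

Lemma pow1B_le_expR (x : R) k : x <= 1 -> (1 - x) ^+ k <= expR (- (k%:R * x)).
Proof.
move=> x_le1; rewrite -mulrN expRM_natl.
by apply: lerXn2r; rewrite ?nnegrE ?expR_ge0 ?subr_ge0 //; apply: expR_ge1Dx.
Qed.

Lemma ln2_gt0 : 0 < ln (2 : R).
Proof. by rewrite ln_gt0 // ltr1n. Qed.

Lemma ln2_le1 : ln (2 : R) <= 1.
Proof.
rewrite -ler_expR lnK ?posrE //.
by apply: le_trans (expR_ge1Dx 1); lra.
Qed.

Lemma contraction_pow_le (eps : R) (N T : nat) : 0 < eps < 1/4 -> (0 < N)%N ->
  10 * (ln (N%:R : R) / ln 2) / (eps / 2) ^+ 2 <= T%:R ->
  (1 - 2 * eps ^+ 2 / 3) ^+ T * N%:R <= (N%:R ^+ 3)^-1.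
Proof.
move=> /andP[eps_gt0 eps_lt] N_gt0 T_ge.
have N_pos : (N%:R : R) \in Num.pos by rewrite posrE ltr0n.
set x := 2 * eps ^+ 2 / 3.
have x_ge0 : 0 <= x by rewrite /x; nra.
have x_le1 : x <= 1 by rewrite /x; nra.
have lnN_ge0 : 0 <= ln (N%:R : R) by rewrite ln_ge0 // ler1n.
have lnN_le : ln (N%:R : R) <= ln (N%:R) / ln 2.
  by rewrite ler_pdivlMr ?ln2_gt0 // ler_piMr ?ln2_le1.
have Tx_ge : 4 * ln (N%:R : R) <= T%:R * x.
  have := ler_wpM2r x_ge0 T_ge.
  have -> : 10 * (ln (N%:R : R) / ln 2) / (eps / 2) ^+ 2 * x = 80 / 3 * (ln (N%:R) / ln 2).
    by rewrite /x; field; rewrite gt_eqF ?ln2_gt0 ?lt0r_neq0.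
  lra.
have pow_le : (1 - x) ^+ T <= (N%:R ^+ 4)^-1.
  apply: le_trans (pow1B_le_expR T x_le1) _.
  have -> : (N%:R ^+ 4 : R)^-1 = expR (- (4%:R * ln N%:R)) by rewrite expRN expRM_natl lnK.
  by rewrite ler_expR; lra.
have -> : (N%:R ^+ 3 : R)^-1 = (N%:R ^+ 4)^-1 * N%:R.
  by field; rewrite pnatr_eq0 -lt0n.
by rewrite ler_wpM2r.
Qed.

End RealBounds.

Lemma potential_step (R : realType) (V : finType) (e : rel V) (vs : V)
    (eps Gam delta p : R) (l : {ffun V -> nat}) (q v0 v1 : V) :
  symmetric e -> irreflexive e -> 0 < eps < 1/4 ->
  Gam = (1 - 2 * eps)^-1 -> delta = eps / 8 ->
  close_to_median e delta Gam l q ->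
  correct_reply e vs q v0 ->
  ~~ correct_reply e vs q v1 && ((v1 == q) || e q v1) ->
  0 <= p <= 1/2 - eps ->
  (1 - p) * potential Gam (upd e l q v0) vs + p * potential Gam (upd e l q v1) vs
    <= (1 - 2 * eps ^+ 2 / 3) * potential Gam l vs.
Proof.
move=> e_sym e_irr /andP[eps_gt0 eps_lt] GamE deltaE median ok0 /andP[_ err1] p_bd.
have Gam_ge1 : 1 <= Gam by rewrite GamE invf_ge1; lra.
have c0 := correct_reply_compatible e_sym e_irr ok0.
have Phi_ge0 := potential_ge0 Gam_ge1 l vs.
set Phi := potential Gam l vs in Phi_ge0 *.
set C0 := potential_compat e Gam l vs q v0.
set C1 := potential_compat e Gam l vs q v1.
have upd0 : potential Gam (upd e l q v0) vs = Phi - 2 * eps * (Phi - C0).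
  have Gam_inv : Gam^-1 = 1 - 2 * eps by rewrite GamE invrK.
  by rewrite (potential_upd_compat Gam_ge1 _ c0) -/Phi -/C0 Gam_inv; ring.
have upd1 : potential Gam (upd e l q v1) vs <= Phi + 2 * eps / (1 - 2 * eps) * C1.
  have -> : 2 * eps / (1 - 2 * eps) = Gam - 1 by rewrite GamE; field; lra.
  exact: potential_upd_le.
apply: le_trans (_ : _ <= (1 - p) * (Phi - 2 * eps * (Phi - C0))
                           + p * (Phi + 2 * eps / (1 - 2 * eps) * C1)) _.
  by rewrite upd0 lerD2l ler_wpM2l //; case/andP: p_bd.
apply: mixture_le_contraction => //; first (apply/andP; split; lra).
  exact: potential_compat_ge0.
apply: contraction_margin => //; first (apply/andP; split; lra).
have C1_le : C1 <= Phi := potential_compat_le e Gam_ge1 l vs q v1.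
(* If q = vs the correct reply discards everything; an erroneous reply q keeps
   only q, which the correct reply discards; otherwise both replies are
   neighbours of q and the median condition bounds both. *)
have [q_vs|q_vs] := eqVneq q vs.
  move: ok0; rewrite /correct_reply q_vs eqxx => /eqP v0_vs.
  rewrite /C0 v0_vs q_vs potential_compat_self eqxx subr0; left; split; lra.
have eqv0 : e q v0 by move: ok0; rewrite /correct_reply (negbTE q_vs) => /andP[].
have D_ge : (1/2 - eps/8) * (1 + Phi) <= Phi - C0.
  have := median_bound Gam_ge1 vs eqv0 median.
  by rewrite (sum_compatible_relw e Gam_ge1) c0 mulr1n -/Phi -/C0 deltaE; lra.
case/orP: err1 => [/eqP v1_q | eqv1].
  have v0_q : v0 != q by apply: contraTneq eqv0 => ->; rewrite e_irr.
  have := potential_compat_add_le Gam_ge1 l q_vs (query_incompatible e v0_q).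
  rewrite /C1 v1_q potential_compat_self (negbTE q_vs) -/C0 -/Phi => C0_le.
  left; split; first lra.
  have : 0 <= (1/4 - eps) * Phi by rewrite mulr_ge0 //; lra.
  nra.
right; split=> //.
have := median_bound Gam_ge1 vs eqv1 median.
rewrite (sum_compatible_relw e Gam_ge1) deltaE -/C1 -/Phi.
have : 0 <= (compatible e q v1 vs)%:R :> R by rewrite ler0n.
lra.
Qed.

Definition flip_at n (k : 'I_n) (es : n.-tuple bool) : n.-tuple bool :=
  [tuple if i == k then ~~ tnth es i else tnth es i | i < n].

Lemma tnth_flip_at n (k i : 'I_n) es :
  tnth (flip_at k es) i = if i == k then ~~ tnth es i else tnth es i.
Proof. by rewrite tnth_mktuple. Qed.

Lemma flip_atK n (k : 'I_n) : involutive (flip_at k).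
Proof.
move=> es; apply: eq_from_tnth => i; rewrite !tnth_flip_at.
by case: eqP => // _; rewrite negbK.
Qed.

Lemma take_flip_at n (k : 'I_n) es : take k (flip_at k es) = take k es.
Proof.
apply: (@eq_from_nth _ false); first by rewrite !size_take !size_tuple.
move=> i; rewrite size_take size_tuple ltn_ord => lt_i_k.
have lt_i_n := ltn_trans lt_i_k (ltn_ord k).
rewrite !nth_take // -[nth _ (flip_at _ _) _](tnth_nth false _ (Ordinal lt_i_n)).
by rewrite tnth_flip_at -(inj_eq val_inj) /= (ltn_eqF lt_i_k) (tnth_nth false).
Qed.

Section ErrorPatterns.
Variables (R : realType) (n : nat) (pr : nat -> R).
Hypothesis pr01 : forall i, (i < n)%N -> 0 <= pr i <= 1.

Definition bern (p : R) (b : bool) : R := if b then p else 1 - p.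

Definition pattern_prob (es : n.-tuple bool) : R :=
  \prod_(i < n) bern (pr i) (tnth es i).

Definition pattern_prob_except (k : 'I_n) (es : n.-tuple bool) : R :=
  \prod_(i < n | i != k) bern (pr i) (tnth es i).

Lemma bernN p b : bern p b + bern p (~~ b) = 1.
Proof. by case: b; rewrite /bern /= ?subrK // addrC subrK. Qed.

Lemma bern_ge0 (i : 'I_n) b : 0 <= bern (pr i) b.
Proof. by have /andP[? ?] := pr01 (ltn_ord i); case: b; rewrite /bern ?subr_ge0. Qed.

Lemma pattern_prob_ge0 es : 0 <= pattern_prob es.
Proof. by apply: prodr_ge0 => i _; apply: bern_ge0. Qed.

Lemma sum_pattern_prob : \sum_(es : n.-tuple bool) pattern_prob es = 1.
Proof.
have : \prod_(i < n) \sum_(b : bool) bern (pr i) b = 1.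
  by apply: big1 => i _; rewrite big_bool; exact: (bernN _ true).
rewrite bigA_distr_bigA /= => <-.
rewrite (reindex (@tuple_of_finfun _ _)); last first.
  by exists (@finfun_of_tuple _ _) => f _; [apply: tuple_of_finfunK | apply: finfun_of_tupleK].
by apply: eq_bigr => f _; apply: eq_bigr => i _; rewrite tnth_mktuple.
Qed.

Lemma pattern_probD1 (k : 'I_n) es :
  pattern_prob es = bern (pr k) (tnth es k) * pattern_prob_except k es.
Proof. by rewrite /pattern_prob (bigD1 k). Qed.

Lemma pattern_prob_except_flip (k : 'I_n) es :
  pattern_prob_except k (flip_at k es) = pattern_prob_except k es.
Proof. by apply: eq_bigr => i /negbTE ik; rewrite tnth_flip_at ik. Qed.

Lemma sum_pattern_prob_flip (k : 'I_n) (F : n.-tuple bool -> R) :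
  \sum_es pattern_prob es * F es =
  \sum_es pattern_prob_except k es * (bern (pr k) (~~ tnth es k) * F (flip_at k es)).
Proof.
rewrite (reindex_inj (inv_inj (flip_atK k))); apply: eq_bigr => es _.
by rewrite (pattern_probD1 k) pattern_prob_except_flip tnth_flip_at eqxx mulrCA mulrA.
Qed.

Lemma expect_flip_le (k : 'I_n) (F0 F1 : n.-tuple bool -> R) (rho : R) :
  (forall es, F0 (flip_at k es) = F0 es) ->
  (forall es, bern (pr k) (tnth es k) * F1 es
              + bern (pr k) (~~ tnth es k) * F1 (flip_at k es) <= rho * F0 es) ->
  \sum_es pattern_prob es * F1 es <= rho * \sum_es pattern_prob es * F0 es.
Proof.
move=> F0_flip F1_le.
have double F : (\sum_es pattern_prob es * F es) *+ 2 =
    \sum_es pattern_prob_except k es *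
      (bern (pr k) (tnth es k) * F es + bern (pr k) (~~ tnth es k) * F (flip_at k es)).
  rewrite mulr2n {1}(sum_pattern_prob_flip k) -big_split /=.
  by apply: eq_bigr => es _; rewrite (pattern_probD1 k); ring.
rewrite -(ler_pMn2r (_ : 0 < 2)%N) // -mulrnAr !double mulr_sumr.
apply: ler_sum => es _; rewrite F0_flip -mulrDl bernN mul1r mulrCA.
by rewrite ler_wpM2l ?F1_le // prodr_ge0 // => i _; apply: bern_ge0.
Qed.

End ErrorPatterns.

Section LBSearch.
Variables (R : realType) (V : finType) (e : rel V) (vs : V) (eps Gam delta : R).
Variables (Tn : nat) (pr : nat -> R) (Q A : seq bool -> V).
Hypotheses (e_sym : symmetric e) (e_irr : irreflexive e).
Hypotheses (eps_bd : 0 < eps < 1/4) (GamE : Gam = (1 - 2 * eps)^-1) (deltaE : delta = eps / 8).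
Hypothesis pr_bd : forall i, (i < Tn)%N -> 0 <= pr i <= 1/2 - eps.
Hypothesis query_close : forall (es : Tn.-tuple bool) k, (k < Tn)%N ->
  close_to_median e delta Gam (counters e Q A es k) (Q (take k es)).
Hypothesis reply_spec : forall (es : Tn.-tuple bool) k, (k < Tn)%N ->
  let q := Q (take k es) in
  let v := A (take k.+1 es) in
  if nth false es k then ~~ correct_reply e vs q v && ((v == q) || e q v)
  else correct_reply e vs q v.

Let Gam_ge1 : 1 <= Gam.
Proof. by case/andP: eps_bd => eps_gt0 eps_lt; rewrite GamE invf_ge1; lra. Qed.

Let pr01 i : (i < Tn)%N -> 0 <= pr i <= 1.
Proof.
move=> lt_i_Tn; case/andP: eps_bd (pr_bd lt_i_Tn) => ? ? /andP[? ?].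
by apply/andP; split; lra.
Qed.

Lemma counters_take (s s' : seq bool) k :
  take k s = take k s' -> counters e Q A s k = counters e Q A s' k.
Proof.
elim: k => [//|k IH] eq_take /=.
have eq_take_k : take k s = take k s'.
  by rewrite -(take_takel s (leqnSn k)) eq_take take_takel.
by rewrite IH // eq_take_k eq_take.
Qed.

Lemma countersS (s : seq bool) k :
  counters e Q A s k.+1 = upd e (counters e Q A s k) (Q (take k s)) (A (take k.+1 s)).
Proof. by []. Qed.

Definition expected_potential k : R :=
  \sum_(es : Tn.-tuple bool) pattern_prob pr es * potential Gam (counters e Q A es k) vs.

Lemma expected_potential_step (k : 'I_Tn) :
  expected_potential k.+1 <= (1 - 2 * eps ^+ 2 / 3) * expected_potential k.
Proof.
rewrite /expected_potential.
apply: (expect_flip_le (k := k) (F0 := fun es => potential Gam (counters e Q A es k) vs)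
  (F1 := fun es => potential Gam (counters e Q A es k.+1) vs) pr01) => es; cbv beta.
  by rewrite (counters_take (take_flip_at k es)).
have := reply_spec es (ltn_ord k); have := reply_spec (flip_at k es) (ltn_ord k).
rewrite !countersS (counters_take (take_flip_at k es)) !take_flip_at.
rewrite -!(tnth_nth false) tnth_flip_at eqxx.
have close := query_close es (ltn_ord k); have p_bd := pr_bd (ltn_ord k).
case: (tnth es k) => /= reply_flip reply_es.
  rewrite addrC.
  exact: (potential_step e_sym e_irr eps_bd GamE deltaE close reply_flip reply_es p_bd).
exact: (potential_step e_sym e_irr eps_bd GamE deltaE close reply_es reply_flip p_bd).
Qed.

Lemma expected_potential_le k :
  (k <= Tn)%N -> expected_potential k <= (1 - 2 * eps ^+ 2 / 3) ^+ k * #|V|%:R.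
Proof.
elim: k => [_|k IH lt_k_Tn].
  rewrite expr0 mul1r /expected_potential.
  apply: le_trans (_ : _ <= \sum_(es : Tn.-tuple bool) pattern_prob pr es * #|V|%:R) _.
    apply: ler_sum => es _; rewrite ler_wpM2l ?(pattern_prob_ge0 pr01) //.
    exact: (potential_init Gam_ge1 vs).
  by rewrite -mulr_suml sum_pattern_prob mul1r.
apply: le_trans (expected_potential_step (Ordinal lt_k_Tn)) _.
set rho := 1 - 2 * eps ^+ 2 / 3.
rewrite exprS -mulrA; apply: ler_wpM2l; last exact: IH (ltnW lt_k_Tn).
by case/andP: eps_bd => ? ?; rewrite /rho; nra.
Qed.

Lemma prob_wrong_le_expected_potential (Out : Tn.-tuple bool -> V) :
  (forall (es : Tn.-tuple bool) (u : V),
     (counters e Q A es Tn (Out es) <= counters e Q A es Tn u)%N) ->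
  \sum_(es : Tn.-tuple bool | Out es != vs) pattern_prob pr es <= expected_potential Tn.
Proof.
move=> Out_min; rewrite /expected_potential [leRHS](bigID (fun es => Out es != vs)) /=.
rewrite -[leLHS]addr0; apply: lerD.
  apply: ler_sum => es wrong.
  rewrite -[leLHS]mulr1 ler_wpM2l ?(pattern_prob_ge0 pr01) //.
  exact: potential_ge1 wrong (Out_min es vs).
by apply: sumr_ge0 => es _; rewrite mulr_ge0 ?(pattern_prob_ge0 pr01) ?potential_ge0.
Qed.

End LBSearch.

Unset Implicit Arguments.

Theorem lemma11 (R : realType) (V : finType) (e : rel V) (vs : V) (eps : R)
  (Tn : nat) (pr : nat -> R) (Q A : seq bool -> V) (Out : Tn.-tuple bool -> V) :
  symmetric e -> irreflexive e -> (forall x y, connect e x y) ->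
  0 < eps -> eps <= 1/2 -> eps / 2 < 1/8 ->
  let n := #|V| in
  let p := 1/2 - eps in
  let eta := eps / 2 in
  let delta := eta / 4 in
  let Gam := (1 - 4 * eta)^-1 in
  let tau := 10 * (ln (n%:R) / ln 2) / eta ^+ 2 in
  tau <= Tn%:R < tau + 1 ->
  (forall i, (i < Tn)%N -> 0 <= pr i <= p) ->
  (forall (es : Tn.-tuple bool) (k : nat), (k < Tn)%N ->
     close_to_median e delta Gam (counters e Q A es k) (Q (take k es))) ->
  (forall (es : Tn.-tuple bool) (k : nat), (k < Tn)%N ->
     let q := Q (take k es) in
     let v := A (take k.+1 es) in
     if nth false es k
     then ~~ correct_reply e vs q v && ((v == q) || e q v)
     else correct_reply e vs q v) ->
  (forall (es : Tn.-tuple bool) (u : V),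
     (counters e Q A es Tn (Out es) <= counters e Q A es Tn u)%N) ->
  1 - (n%:R ^+ 3)^-1 <=
    \sum_(es : Tn.-tuple bool | Out es == vs)
       \prod_(i < Tn) (if tnth es i then pr i else 1 - pr i).
Proof.
move=> e_sym e_irr _ eps_gt0 _ eps_lt n p eta delta Gam tau /andP[T_ge _].
move=> pr_bd query_close reply_spec Out_min.
have eps_bd : 0 < eps < 1/4 by apply/andP; split; lra.
have GamE : Gam = (1 - 2 * eps)^-1 by rewrite /Gam /eta; congr _^-1; field.
have deltaE : delta = eps / 8 by rewrite /delta /eta; field.
have n_gt0 : (0 < n)%N by apply/card_gt0P; exists vs.
have wrong := prob_wrong_le_expected_potential vs eps_bd GamE pr_bd Out_min.
have decay := expected_potential_le e_sym e_irr eps_bd GamE deltaE pr_bd query_close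
  reply_spec (leqnn Tn).
have tail := contraction_pow_le eps_bd n_gt0 T_ge.
have total := sum_pattern_prob Tn pr.
rewrite (bigID (fun es => Out es == vs)) /= in total.
rewrite -/n in decay.
change (1 - (n%:R ^+ 3)^-1 <= \sum_(es : Tn.-tuple bool | Out es == vs) pattern_prob pr es).
lra.
Qed.
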